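(* Let $\mathfrak n$ be the $7$-dimensional real Lie algebra with basis $\{u_1,u_2,z,v_1,v_2,e_1,e_2\}$ whose only nonzero brackets (up to antisymmetry) are $[e_1,e_2]=z$, $[v_1,v_2]=z$, $[e_1,v_1]=u_1$, $[e_2,v_1]=u_2$, $[e_1,v_2]=u_2$, $[e_2,v_2]=-u_1$, and let $N$ be the corresponding simply connected Lie group with the left-invariant pseudo-Riemannian metric whose only nonzero inner products on basis vectors are $\langle u_i,v_j\rangle=\delta_{ij}$, $\langle z,z\rangle=\varepsilon$, $\langle e_a,e_a\rangle=\bar\varepsilon_a$ ($a=1,2$), where $\varepsilon,\bar\varepsilon_1,\bar\varepsilon_2\in\{1,-1\}$. Then this metric is not a nilsoliton.
   Context: $\mathrm{Ric}$ denotes the Ricci operator of the left-invariant metric ($\langle\mathrm{Ric}\,x,y\rangle=\varrho(x,y)$, $\varrho$ the Ricci tensor). The metric is a nilsoliton if $\mathrm{Ric}=c\cdot\mathrm{Id}+D$ for some $c\in\mathbb R$ and some derivation $D$ of $\mathfrak n$. *)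

(* Left-invariant metrics on a Lie algebra given in coordinates:
   vectors of the n-dimensional Lie algebra are row vectors 'rV[R]_n in a fixed
   basis bv 0, ..., bv (n-1); linear maps act on the right: x |-> x *m M. *)
From HB Require Import structures.
From mathcomp Require Import all_boot all_order all_algebra.
From mathcomp Require Import all_classical all_reals.
Set Implicit Arguments. Unset Strict Implicit. Unset Printing Implicit Defensive.
Import Order.TTheory GRing.Theory Num.Theory.
Local Open Scope ring_scope.

Section LieMetric.
Variables (R : realType) (n : nat).

Definition bv (k : 'I_n) : 'rV[R]_n := \row_j (j == k)%:R.

(* bracket extended bilinearly from structure constants C i j = [b_i, b_j] *)
Definition br (C : 'I_n -> 'I_n -> 'rV[R]_n) (x y : 'rV[R]_n) : 'rV[R]_n :=
  \sum_i \sum_j (x 0 i * y 0 j) *: C i j.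

Definition ip (g : 'M[R]_n) (x y : 'rV[R]_n) : R := (x *m g *m y^T) 0 0.

(* Levi-Civita connection (Koszul formula) of the left-invariant metric:
   2 <nabla_x y, w> = <[x,y],w> - <[y,w],x> + <[w,x],y>. *)
Definition lc C g (x y : 'rV[R]_n) : 'rV[R]_n :=
  ((2 : R)^-1 *: \row_k (ip g (br C x y) (bv k) - ip g (br C y (bv k)) x
                          + ip g (br C (bv k) x) y)) *m invmx g.

Definition curv C g (x y z : 'rV[R]_n) : 'rV[R]_n :=
  lc C g x (lc C g y z) - lc C g y (lc C g x z) - lc C g (br C x y) z.

Definition ricci_form C g (y z : 'rV[R]_n) : R :=
  \sum_i (curv C g (bv i) y z) 0 i.

(* Ricci operator: <Ric x, y> = rho(x,y), i.e. x Ric g y^T = x P y^T *)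
Definition ricci_op C g : 'M[R]_n :=
  (\matrix_(i, j) ricci_form C g (bv i) (bv j)) *m invmx g.

Definition is_derivation C (D : 'M[R]_n) : Prop :=
  forall x y, br C x y *m D = br C (x *m D) y + br C x (y *m D).

Definition nilsoliton C g : Prop :=
  exists (c : R) (D : 'M[R]_n), is_derivation C D /\ ricci_op C g = c%:M + D.

End LieMetric.

(* The 7-dimensional example; basis order: 0=u1,1=u2,2=z,3=v1,4=v2,5=e1,6=e2 *)
Definition nbv (R : realType) (k : nat) : 'rV[R]_7 := \row_j ((j : nat) == k)%:R.

Definition brN (R : realType) (i j : 'I_7) : 'rV[R]_7 :=
  match nat_of_ord i, nat_of_ord j with
  | 5, 6 => nbv R 2 | 6, 5 => - nbv R 2      (* [e1,e2] = z *)
  | 3, 4 => nbv R 2 | 4, 3 => - nbv R 2      (* [v1,v2] = z *)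
  | 5, 3 => nbv R 0 | 3, 5 => - nbv R 0      (* [e1,v1] = u1 *)
  | 6, 3 => nbv R 1 | 3, 6 => - nbv R 1      (* [e2,v1] = u2 *)
  | 5, 4 => nbv R 1 | 4, 5 => - nbv R 1      (* [e1,v2] = u2 *)
  | 6, 4 => - nbv R 0 | 4, 6 => nbv R 0      (* [e2,v2] = -u1 *)
  | _, _ => 0
  end.

Definition gN (R : realType) (eps eb1 eb2 : R) : 'M[R]_7 :=
  \matrix_(i, j)
    match nat_of_ord i, nat_of_ord j with
    | 0, 3 | 3, 0 | 1, 4 | 4, 1 => 1
    | 2, 2 => eps
    | 5, 5 => eb1
    | 6, 6 => eb2
    | _, _ => 0
    end.

From HB Require Import structures.
From mathcomp Require Import all_boot all_order all_algebra.
From mathcomp Require Import all_classical all_reals.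
From mathcomp Require Import ring lra.
Set Implicit Arguments. Unset Strict Implicit. Unset Printing Implicit Defensive.
Import Order.TTheory GRing.Theory Num.Theory.
Local Open Scope ring_scope.

(* A derivation D preserves the centre, which is spanned by z = [e1,e2] = [v1,v2];
   reading off the z-coordinate of D z from either bracket gives
   D(e1,e1) + D(e2,e2) = D(v1,v1) + D(v2,v2).  For a nilsoliton D = Ric - c Id, so the
   diagonal of the Ricci operator would satisfy the same relation.  But the Koszul
   formula gives rho(v_i,u_i) = 0 and rho(e_a,e_a) = -eps eb_b / 2 for {a,b} = {1,2},
   hence Ric(e1,e1) + Ric(e2,e2) - Ric(v1,v1) - Ric(v2,v2) = -eps eb1 eb2 <> 0. *)

Section LeftInvariantMetric.
Variables (R : realType) (n : nat) (C : 'I_n -> 'I_n -> 'rV[R]_n) (g : 'M[R]_n).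

Lemma bv_mulmx (i : 'I_n) (M : 'M[R]_n) : bv R i *m M = row i M.
Proof.
apply/rowP => j; rewrite !mxE (bigD1 i) //= big1 ?addr0; first by rewrite mxE eqxx mul1r.
by move=> k /negbTE ki; rewrite mxE ki mul0r.
Qed.

Lemma br_bvl (i : 'I_n) y : br C (bv R i) y = \sum_j y 0 j *: C i j.
Proof.
rewrite /br (bigD1 i) //= [X in _ + X]big1 ?addr0.
  by apply: eq_bigr => j _; rewrite mxE eqxx mul1r.
by move=> k /negbTE ki; apply: big1 => j _; rewrite mxE ki mul0r scale0r.
Qed.

Lemma br_bvr x (j : 'I_n) : br C x (bv R j) = \sum_i x 0 i *: C i j.
Proof.
rewrite /br; apply: eq_bigr => i _; rewrite (bigD1 j) //= big1 ?addr0.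
  by rewrite mxE eqxx mulr1.
by move=> k /negbTE kj; rewrite mxE kj mulr0 scale0r.
Qed.

Lemma br_bv (i j : 'I_n) : br C (bv R i) (bv R j) = C i j.
Proof.
rewrite br_bvl (bigD1 j) //= big1 ?addr0; first by rewrite mxE eqxx scale1r.
by move=> k /negbTE kj; rewrite mxE kj scale0r.
Qed.

Lemma brZl a x y : br C (a *: x) y = a *: br C x y.
Proof.
rewrite /br scaler_sumr; apply: eq_bigr => i _; rewrite scaler_sumr.
by apply: eq_bigr => j _; rewrite mxE scalerA mulrA.
Qed.

Lemma brZr a x y : br C x (a *: y) = a *: br C x y.
Proof.
rewrite /br scaler_sumr; apply: eq_bigr => i _; rewrite scaler_sumr.
by apply: eq_bigr => j _; rewrite mxE scalerA mulrCA.
Qed.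

Lemma ipZl a x y : ip g (a *: x) y = a * ip g x y.
Proof. by rewrite /ip -!scalemxAl mxE. Qed.

Lemma ipZr a x y : ip g x (a *: y) = a * ip g x y.
Proof. by rewrite /ip linearZ /= -!scalemxAr mxE. Qed.

Lemma ip_bvr x (k : 'I_n) : ip g x (bv R k) = (x *m g) 0 k.
Proof.
rewrite /ip mxE (bigD1 k) //= big1 ?addr0; first by rewrite !mxE eqxx mulr1.
by move=> b /negbTE bk; rewrite !mxE bk mulr0.
Qed.

Lemma lcZl a x y : lc C g (a *: x) y = a *: lc C g x y.
Proof.
rewrite /lc -!scalemxAl scalerA mulrC -scalerA; congr (_ *: _).
rewrite scalemxAl; congr (_ *m _).
by apply/rowP => k; rewrite !mxE brZl brZr !ipZl ipZr mulrDr mulrBr.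
Qed.

Lemma lcZr a x y : lc C g x (a *: y) = a *: lc C g x y.
Proof.
rewrite /lc -!scalemxAl scalerA mulrC -scalerA; congr (_ *: _).
rewrite scalemxAl; congr (_ *m _).
by apply/rowP => k; rewrite !mxE brZl brZr !ipZl ipZr mulrDr mulrBr.
Qed.

Lemma lc0l y : lc C g 0 y = 0.
Proof. by have := lcZl 0 0 y; rewrite !scale0r. Qed.

Lemma lc0r x : lc C g x 0 = 0.
Proof. by have := lcZr 0 x 0; rewrite !scale0r. Qed.

Lemma lcNr x y : lc C g x (- y) = - lc C g x y.
Proof. by rewrite -scaleN1r lcZr scaleN1r. Qed.

Lemma lcNl x y : lc C g (- x) y = - lc C g x y.
Proof. by rewrite -scaleN1r lcZl scaleN1r. Qed.

Lemma derivation_bv_coord (D : 'M[R]_n) (i j k : 'I_n) : is_derivation C D ->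
  (C i j *m D) 0 k = \sum_l D i l * C l j 0 k + \sum_l D j l * C i l 0 k.
Proof.
move/(_ (bv R i) (bv R j)); rewrite br_bv !bv_mulmx br_bvr br_bvl => ->.
by rewrite !mxE !summxE; congr (_ + _); apply: eq_bigr => l _; rewrite !mxE.
Qed.

Lemma ricci_op_entry (i j : 'I_n) :
  ricci_op C g i j = \sum_k ricci_form C g (bv R i) (bv R k) * invmx g k j.
Proof. by rewrite mxE; apply: eq_bigr => k _; rewrite mxE. Qed.

End LeftInvariantMetric.

Definition u1 : 'I_7 := @Ordinal 7 0 isT.
Definition u2 : 'I_7 := @Ordinal 7 1 isT.
Definition z  : 'I_7 := @Ordinal 7 2 isT.
Definition v1 : 'I_7 := @Ordinal 7 3 isT.
Definition v2 : 'I_7 := @Ordinal 7 4 isT.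
Definition e1 : 'I_7 := @Ordinal 7 5 isT.
Definition e2 : 'I_7 := @Ordinal 7 6 isT.

Ltac simpl_ord := cbn [nat_of_ord u1 u2 z v1 v2 e1 e2].

Lemma sum_ord7 (V : nmodType) (F : 'I_7 -> V) :
  \sum_i F i = F u1 + F u2 + F z + F v1 + F v2 + F e1 + F e2.
Proof.
rewrite !big_ord_recl big_ord0 addr0 !addrA.
by repeat congr (_ + _); congr F; apply: val_inj.
Qed.

Lemma nbvE (R : realType) (k : nat) (lt_k7 : (k < 7)%N) : nbv R k = bv R (Ordinal lt_k7).
Proof. by apply/rowP => j; rewrite !mxE. Qed.

Lemma brN_derivation_diag (R : realType) (D : 'M[R]_7) : is_derivation (@brN R) D ->
  D e1 e1 + D e2 e2 = D v1 v1 + D v2 v2.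
Proof.
move=> hD.
have := derivation_bv_coord e1 e2 z hD; have := derivation_bv_coord v1 v2 z hD.
rewrite !sum_ord7 /brN; simpl_ord.
rewrite !nbvE // !bv_mulmx !mxE /= !(mulr0, mulr1, oppr0, addr0, add0r).
by move=> Dz_v Dz_e; rewrite -Dz_e Dz_v.
Qed.

Section ExampleMetric.
Variables (R : realType) (eps eb1 eb2 : R).
Hypotheses (eps_sq : eps * eps = 1) (eb1_sq : eb1 * eb1 = 1) (eb2_sq : eb2 * eb2 = 1).

Local Notation g := (gN eps eb1 eb2).

Lemma gN_invmx : invmx g = g.
Proof.
have gN_sq : g *m g = 1%:M.
  apply/matrixP => i j; rewrite !mxE sum_ord7 !mxE.
  case: i => [[|[|[|[|[|[|[|i]]]]]]] Hi] //;
  case: j => [[|[|[|[|[|[|[|j]]]]]]] Hj] //=;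
  by rewrite ?(mul0r, mulr0, mul1r, mulr1, add0r, addr0).
have [gN_unit _] := mulmx1_unit gN_sq.
by rewrite -[invmx _]mulmx1 -gN_sq mulKmx.
Qed.

Definition brN_lowered (a b c : nat) : R :=
  match a, b, c with
  | 5, 6, 2 => eps | 6, 5, 2 => - eps
  | 3, 4, 2 => eps | 4, 3, 2 => - eps
  | 5, 3, 3 => 1 | 3, 5, 3 => -1
  | 6, 3, 4 => 1 | 3, 6, 4 => -1
  | 5, 4, 4 => 1 | 4, 5, 4 => -1
  | 6, 4, 3 => -1 | 4, 6, 3 => 1
  | _, _, _ => 0
  end.

Lemma ip_brN_bv (a b c : 'I_7) : ip g (brN R a b) (bv R c) = brN_lowered a b c.
Proof.
rewrite ip_bvr.
case: a => [[|[|[|[|[|[|[|a]]]]]]] Ha] //;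
case: b => [[|[|[|[|[|[|[|b]]]]]]] Hb] //; cbn [brN nat_of_ord brN_lowered];
rewrite ?mul0mx ?nbvE // ?mulNmx ?bv_mulmx !mxE //;
case: c => [[|[|[|[|[|[|[|c]]]]]]] Hc] //=; by rewrite ?opprK ?oppr0.
Qed.

Definition chrN (i j : 'I_7) : 'rV[R]_7 :=
  match nat_of_ord i, nat_of_ord j with
  | 2, 3 => - (eps / 2) *: bv R u2
  | 2, 4 => (eps / 2) *: bv R u1
  | 2, 5 => - (eps * eb2 / 2) *: bv R e2
  | 2, 6 => (eps * eb1 / 2) *: bv R e1
  | 3, 2 => - (eps / 2) *: bv R u2
  | 3, 3 => eb1 *: bv R e1
  | 3, 4 => (eps * eps / 2) *: bv R z
  | 3, 5 => - bv R u1
  | 4, 2 => (eps / 2) *: bv R u1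
  | 4, 3 => - (eps * eps / 2) *: bv R z
  | 4, 4 => eb1 *: bv R e1
  | 4, 5 => - bv R u2
  | 5, 2 => - (eps * eb2 / 2) *: bv R e2
  | 5, 6 => (eps * eps / 2) *: bv R z
  | 6, 2 => (eps * eb1 / 2) *: bv R e1
  | 6, 3 => bv R u2
  | 6, 4 => - bv R u1
  | 6, 5 => - (eps * eps / 2) *: bv R z
  | _, _ => 0
  end.

Lemma lc_gN_bv (i j : 'I_7) : lc (@brN R) g (bv R i) (bv R j) = chrN i j.
Proof.
rewrite /lc gN_invmx; apply/rowP => m.
rewrite -scalemxAl mxE [X in _ * X]mxE sum_ord7 !mxE !br_bv !ip_brN_bv.
case: i => [[|[|[|[|[|[|[|i]]]]]]] Hi] //;
case: j => [[|[|[|[|[|[|[|j]]]]]]] Hj] //;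
cbn [brN_lowered nat_of_ord u1 u2 z v1 v2 e1 e2 chrN]; rewrite ?mxE;
case: m => [[|[|[|[|[|[|[|m]]]]]]] Hm] //=; by field.
Qed.

Ltac ricci_entry :=
  rewrite /ricci_form sum_ord7 /curv !lc_gN_bv /chrN; simpl_ord;
  rewrite ?lcZr ?lcNr ?lc0r !br_bv /brN; simpl_ord;
  rewrite ?nbvE // ?lcNl ?lc0l !lc_gN_bv /chrN; simpl_ord;
  rewrite !mxE /=; by field.

Lemma ricci_gN_v1u1 : ricci_form (@brN R) g (bv R v1) (bv R u1) = 0.
Proof. ricci_entry. Qed.

Lemma ricci_gN_v2u2 : ricci_form (@brN R) g (bv R v2) (bv R u2) = 0.
Proof. ricci_entry. Qed.

Lemma ricci_gN_e1e1 : ricci_form (@brN R) g (bv R e1) (bv R e1) = - (eps * eb2) / 2.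
Proof. ricci_entry. Qed.

Lemma ricci_gN_e2e2 : ricci_form (@brN R) g (bv R e2) (bv R e2) = - (eps * eb1) / 2.
Proof. ricci_entry. Qed.

Lemma ricci_gN_diag :
  ricci_op (@brN R) g e1 e1 + ricci_op (@brN R) g e2 e2
  - (ricci_op (@brN R) g v1 v1 + ricci_op (@brN R) g v2 v2) = - (eps * eb1 * eb2).
Proof.
rewrite !ricci_op_entry gN_invmx !sum_ord7 !mxE; simpl_ord.
rewrite ricci_gN_v1u1 ricci_gN_v2u2 ricci_gN_e1e1 ricci_gN_e2e2.
(* Keep the remaining entries opaque: otherwise rewriting compares them by unfolding. *)
move: (ricci_form _ g) => rho.
by rewrite !mulr0; field.
Qed.

End ExampleMetric.

Theorem mainTheorem5 (R : realType) (eps eb1 eb2 : R) :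
  (eps = 1 \/ eps = -1) -> (eb1 = 1 \/ eb1 = -1) -> (eb2 = 1 \/ eb2 = -1) ->
  ~ nilsoliton (@brN R) (gN eps eb1 eb2).
Proof.
move=> eps_pm eb1_pm eb2_pm [c [D [hD ricE]]].
have sign_sq (x : R) : x = 1 \/ x = -1 -> x * x = 1.
  by case=> ->; rewrite ?mulrNN mulr1.
have sign_neq0 (x : R) : x = 1 \/ x = -1 -> x != 0.
  by case=> ->; rewrite ?oppr_eq0 oner_eq0.
have Ddiag (a : 'I_7) : D a a = ricci_op (@brN R) (gN eps eb1 eb2) a a - c.
  by rewrite ricE !mxE eqxx mulr1n addrAC subrr add0r.
have := brN_derivation_diag hD; rewrite !Ddiag => Ric_balance.
have Ric_defect := ricci_gN_diag (sign_sq _ eps_pm) (sign_sq _ eb1_pm) (sign_sq _ eb2_pm).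
have : - (eps * eb1 * eb2) = 0 by rewrite -Ric_defect; lra.
by move/eqP; apply/negP; rewrite oppr_eq0 !mulf_neq0 ?sign_neq0.
Qed.
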